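(* Let $q$ be a power of $2$ and $r\in[q-1]$. The minimum Hamming distance $d$ of the QLRS code, viewed as the block code $\{(f(\boldsymbol v))_{\boldsymbol v\in\mathbb F_q^2}: f\in\mathcal C_q(\Phi,q-r)\}\subseteq\mathbb F_q^{q^2}$, satisfies $qr+1\le d\le qr+q$.
   Context: $\Phi=\{\alpha x^2+\beta x+\gamma:\alpha,\beta,\gamma\in\mathbb F_q\}$. For $f\in\mathbb F_q[x,y]$ and $\phi\in\Phi$, $f|_\phi$ is the reduction of $f(x,\phi(x))$ modulo $x^q-x$. $\mathcal C_q(\Phi,q-r)$ is the $\mathbb F_q$-space of $f\in\mathbb F_q[x,y]$ with $\deg_xf,\deg_yf\le q-1$ and $\deg f|_\phi<q-r$ for all $\phi\in\Phi$. The minimum Hamming distance is the minimum number of nonzero coordinates of a nonzero evaluation vector. *)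

From HB Require Import structures.
From mathcomp Require Import all_boot all_order all_algebra.
Set Implicit Arguments. Unset Strict Implicit. Unset Printing Implicit Defensive.
Import GRing.Theory.
Local Open Scope ring_scope.

(* Bivariate polynomials over F are represented as {poly {poly F}}:
   f = \sum_j f_j(x) y^j, with the outer variable y and inner variable x. *)

Definition bideg_lt (F : fieldType) (q : nat) (f : {poly {poly F}}) : bool :=
  (size f <= q)%N && [forall j : 'I_(size f), (size (nth 0%R (polyseq f) j) <= q)%N].

Definition quadPoly (F : fieldType) (a b c : F) : {poly F} :=
  a *: 'X^2 + b *: 'X + c%:P.

Definition restrict (F : fieldType) (q : nat) (f : {poly {poly F}})
  (phi : {poly F}) : {poly F} :=
  f.[phi] %% ('X^q - 'X).

Definition inQLRS (F : finFieldType) (q r : nat) (f : {poly {poly F}}) : bool :=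
  bideg_lt q f &&
  [forall a : F, forall b : F, forall c : F,
      (size (restrict q f (quadPoly a b c)) <= q - r)%N].

Definition eval2 (F : fieldType) (f : {poly {poly F}}) (v : F * F) : F :=
  (f.[v.2%:P]).[v.1].

Definition evalWeight (F : finFieldType) (f : {poly {poly F}}) : nat :=
  #|[set v : F * F | eval2 f v != 0]|.

Definition evalNonzero (F : finFieldType) (f : {poly {poly F}}) : bool :=
  [exists v : F * F, eval2 f v != 0].

From HB Require Import structures.
From mathcomp Require Import all_boot all_order all_algebra.
From mathcomp Require Import finfield ring zify.
Set Implicit Arguments. Unset Strict Implicit. Unset Printing Implicit Defensive.
Import GRing.Theory.
Local Open Scope ring_scope.

(* Lower bound: let f be a nonzero codeword and v = (v1, v2) a point with
   f(v) <> 0.  For every slope b, the restriction of f to the line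
   y = v2 + b (x - v1) is a nonzero polynomial of degree < q - r, so it is
   nonzero at >= r + 1 points of the line, hence at >= r points other than v.
   The q lines through v (with x <> v1) are pairwise disjoint off v, which
   gives q r + 1 nonzero values.
   Upper bound: a polynomial in x alone with q - r - 1 distinct roots is a
   codeword vanishing exactly on q - r - 1 vertical lines. *)

Lemma horner_poly_horner (R : comNzRingType) (f : {poly {poly R}})
    (phi : {poly R}) (x : R) :
  f.[phi].[x] = f.[phi.[x]%:P].[x].
Proof.
elim/poly_ind: f => [|f c IH]; first by rewrite !horner0.
by rewrite !hornerMXaddC !hornerD !hornerM IH hornerC.
Qed.

Lemma card_dep_pairs (T1 T2 : finType) (A : T1 -> {set T2}) :
  #|[set u : T1 * T2 | u.2 \in A u.1]| = (\sum_(a : T1) #|A a|)%N.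
Proof.
rewrite -sum1_card (eq_bigl (fun u : T1 * T2 => predT u.1 && (u.2 \in A u.1)));
  last by move=> u; rewrite inE.
rewrite -(pair_big_dep predT (fun a x => x \in A a) (fun _ _ => 1%N)) /=.
by apply: eq_bigr => a _; rewrite sum1_card.
Qed.

Section FiniteField.

Variable F : finFieldType.
Implicit Types (p : {poly F}) (f : {poly {poly F}}).

Lemma card_roots_lt_size p : p != 0 -> (#|[set x | root p x]| < size p)%N.
Proof.
move=> p0; rewrite cardE; apply: max_poly_roots => //; last exact: enum_uniq.
by apply/allP => x; rewrite mem_enum inE.
Qed.

Lemma card_nonroots_off_point r p a :
  p != 0 -> (size p <= #|F| - r)%N -> (r <= #|[set x | ~~ root p x & x != a]|)%N.
Proof.
move=> p0; have := card_roots_lt_size p0; rewrite -size_poly_gt0 in p0.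
(* [set s] merges the two elaborations of [size p], which lia would treat as distinct atoms. *)
move: p0; set n := #|_|; set s := size p.
have -> : [set x | ~~ root p x & x != a] = ~: [set x | root p x] :\ a.
  by apply/setP => x; rewrite !inE andbC.
have := cardsC [set x | root p x]; rewrite (cardsD1 a (~: _)) -/n.
by case: (a \in _) => /= <-; lia.
Qed.

Lemma horner_modp_XnsubX p x : (p %% ('X^#|F| - 'X)).[x] = p.[x].
Proof.
rewrite [in RHS](divp_eq p ('X^#|F| - 'X)) hornerD hornerM.
by rewrite hornerD hornerN hornerXn hornerX expf_card subrr mulr0 add0r.
Qed.

Lemma horner_restrict f phi x :
  (restrict #|F| f phi).[x] = eval2 f (x, phi.[x]).
Proof. by rewrite /restrict horner_modp_XnsubX horner_poly_horner. Qed.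

Lemma evalNonzeroE f : evalNonzero f = (0 < evalWeight f)%N.
Proof.
apply/existsP/card_gt0P => [[v fv] | [v]]; first by exists v; rewrite inE.
by rewrite inE; exists v.
Qed.

Definition line_through (v : F * F) (b : F) : {poly F} :=
  quadPoly 0 b (v.2 - b * v.1).

Lemma horner_line_through v b x :
  (line_through v b).[x] = v.2 + b * (x - v.1).
Proof.
rewrite /line_through /quadPoly scale0r add0r hornerD hornerZ hornerX hornerC.
ring.
Qed.

Definition line_point (v : F * F) (bx : F * F) : F * F :=
  (bx.2, (line_through v bx.1).[bx.2]).

Lemma line_point_inj v :
  {in [set bx : F * F | bx.2 != v.1] &, injective (line_point v)}.
Proof.
move=> [b x] [b' x']; rewrite inE /= => xv _ [<-].
rewrite !horner_line_through => /addrI /eqP.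
by rewrite -subr_eq0 -mulrBl mulf_eq0 !subr_eq0 (negbTE xv) orbF => /eqP ->.
Qed.

Lemma line_point_center v b : line_point v (b, v.1) = v.
Proof. by case: v => v1 v2; rewrite /line_point horner_line_through subrr mulr0 addr0. Qed.

Lemma line_point_neq v bx : bx.2 != v.1 -> line_point v bx != v.
Proof. by apply: contra_neq => /(congr1 fst). Qed.

Lemma QLRS_weight_lower r f :
  inQLRS #|F| r f -> evalNonzero f -> (#|F| * r + 1 <= evalWeight f)%N.
Proof.
move=> /andP[_ /forallP lines] /existsP[v fv].
pose g b := restrict #|F| f (line_through v b).
have g_size b : (size (g b) <= #|F| - r)%N.
  by move: (lines 0) => /forallP/(_ b)/forallP/(_ (v.2 - b * v.1)).
have gE b x : (g b).[x] = eval2 f (line_point v (b, x)) by exact: horner_restrict.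
have g_neq0 b : g b != 0.
  by apply: contra_neq fv => gb0; rewrite -(line_point_center v b) -gE gb0 horner0.
pose N b := [set x | ~~ root (g b) x & x != v.1].
have N_ge b : (r <= #|N b|)%N.
  exact: card_nonroots_off_point (g_neq0 b) (g_size b).
pose P := [set bx : F * F | bx.2 \in N bx.1].
have P_ge : (#|F| * r <= #|P|)%N.
  by rewrite card_dep_pairs (leq_trans _ (leq_sum _ (fun b _ => N_ge b))) // sum_nat_const.
have off_v bx : bx \in P -> bx.2 != v.1 by rewrite !inE => /andP[].
have support_ge : v |: line_point v @: P \subset [set w | eval2 f w != 0].
  apply/subsetP => w; rewrite !inE => /predU1P[-> // | /imsetP[[b x] Pbx ->]].
  by move: Pbx; rewrite !inE -gE => /andP[].
apply: leq_trans _ (subset_leq_card support_ge).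
rewrite cardsU1 card_in_imset; last first.
  by move=> ? ? /off_v ? /off_v ?; apply: line_point_inj; rewrite inE.
suff -> : v \notin line_point v @: P by rewrite add1n addn1 ltnS.
by apply/imsetP => -[bx /off_v /line_point_neq /eqP + veq]; rewrite -veq.
Qed.

Lemma evalWeight_polyC p : evalWeight p%:P = (#|[set x | ~~ root p x]| * #|F|)%N.
Proof.
rewrite /evalWeight; have -> : [set w | eval2 p%:P w != 0] = setX [set x | ~~ root p x] setT.
  by apply/setP => -[x y]; rewrite !inE /eval2 hornerC andbT.
by rewrite cardsX cardsT.
Qed.

Lemma inQLRS_polyC r p : (size p <= #|F| - r)%N -> inQLRS #|F| r p%:P.
Proof.
move=> p_size; have F_gt1 := card_finNzRing_gt1 F.
apply/andP; split.
- rewrite /bideg_lt size_polyC (leq_trans (leq_b1 _) (ltnW F_gt1)) /=.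
  apply/forallP => j; rewrite coefC; case: (j == 0%N :> nat); last by rewrite size_poly0.
  exact: leq_trans p_size (leq_subr _ _).
- apply/forallP => a; apply/forallP => b; apply/forallP => c.
  rewrite /restrict hornerC modp_small //.
  rewrite size_polyDl ?size_polyXn ?size_polyN ?size_polyX ?ltnS //.
  exact: leq_trans p_size (leq_subr _ _).
Qed.

Lemma exists_poly_card_nonroots k :
  (k < #|F|)%N -> exists p : {poly F}, size p = k.+1 /\ #|[set x | ~~ root p x]| = (#|F| - k)%N.
Proof.
move=> k_lt; pose s := take k (enum F).
have s_size : size s = k by rewrite size_take -cardE k_lt.
have s_uniq : uniq s by apply/take_uniq/enum_uniq.
exists (\prod_(a <- s) ('X - a%:P)); split; first by rewrite size_prod_XsubC s_size.
have -> : [set x | ~~ root (\prod_(a <- s) ('X - a%:P)) x] = ~: [set x in s].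
  by apply/setP => x; rewrite !inE root_prod_XsubC.
by rewrite cardsCs setCK cardsE (card_uniqP s_uniq) s_size.
Qed.

Lemma QLRS_weight_upper r :
  (0 < r < #|F|)%N ->
  exists f, [/\ inQLRS #|F| r f, evalNonzero f & (evalWeight f <= #|F| * r + #|F|)%N].
Proof.
move=> /andP[r_gt0 r_lt].
have [|p [p_size p_nonroots]] := @exists_poly_card_nonroots (#|F| - r - 1); first lia.
have weightE : evalWeight p%:P = (#|F| * r + #|F|)%N.
  by rewrite evalWeight_polyC p_nonroots -subnDA addn1 subKn // mulSn addnC mulnC.
exists p%:P; split; first by apply: inQLRS_polyC; rewrite p_size; lia.
  by rewrite evalNonzeroE weightE; lia.
by rewrite weightE.
Qed.

End FiniteField.

Theorem mainTheorem6 (F : finFieldType) (q r : nat)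
  (hq : #|F| = q) (hq2 : exists m : nat, q = (2 ^ m)%N)
  (hr1 : (1 <= r)%N) (hr2 : (r <= q - 1)%N) :
  (forall f : {poly {poly F}}, inQLRS q r f -> evalNonzero f ->
      (q * r + 1 <= evalWeight f)%N) /\
  (exists f : {poly {poly F}}, [/\ inQLRS q r f, evalNonzero f &
      (evalWeight f <= q * r + q)%N]).
Proof.
subst q; have F_gt1 := card_finNzRing_gt1 F.
split; first exact: QLRS_weight_lower.
by apply: QLRS_weight_upper; apply/andP; split; lia.
Qed.
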